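(* Let $n\geqslant2$, $m\geqslant1$, let $\tau$ be a cuspidal $\mathrm{R}$-representation of $\mathrm{GL}_n(k_\mathrm{F})$, and let $g\in\mathcal{C}_n$ be a matrix which is not diagonal. Then $$\mathrm{Hom}_{\mathrm{R}[\overline{\mathrm{K}_n\cap g\mathrm{K}_n(m)g^{-1}}]}(1,\tau)=0.$$
   Context: $\mathrm{F}$ non-archimedean local field, ring of integers $\mathfrak{o}_\mathrm{F}$, maximal ideal $\mathfrak{p}_\mathrm{F}=\varpi_\mathrm{F}\mathfrak{o}_\mathrm{F}$, normalized valuation $\mathrm{val}_\mathrm{F}$, residue field $k_\mathrm{F}$ of characteristic $p$. $\mathrm{R}$ algebraically closed of characteristic $\ell\neq p$. $\mathrm{K}_n=\mathrm{GL}_n(\mathfrak{o}_\mathrm{F})$, $\mathrm{K}_n^1=1+\mathrm{M}_n(\mathfrak{p}_\mathrm{F})$; for a subgroup $H\subseteq\mathrm{K}_n$, $\overline H$ is its image in $\mathrm{K}_n/\mathrm{K}_n^1=\mathrm{GL}_n(k_\mathrm{F})$. For $m\geqslant1$, $\mathrm{K}_n(m)=\{\left(\begin{smallmatrix}a&b\\c&d\end{smallmatrix}\right)\in\mathrm{K}_n: c\in\mathrm{M}_{1\times(n-1)}(\mathfrak{p}_\mathrm{F}^m),\ d\in1+\mathfrak{p}_\mathrm{F}^m\}$. Cuspidal representation of $\mathrm{GL}_n(k_\mathrm{F})$: irreducible with no nonzero vectors fixed by the unipotent radical of any proper parabolic subgroup. $\mathcal{C}_n$ is the set of matrices $$\begin{pmatrix}\varpi_\mathrm{F}^{\alpha_{n-1}}&&&&\\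 &\varpi_\mathrm{F}^{\alpha_{n-2}}&&&\\ &&\ddots&&\\ &&&\varpi_\mathrm{F}^{\alpha_1}&\\ \tilde v_{n-1}&\tilde v_{n-2}&\cdots&\tilde v_1&1\end{pmatrix}$$ with integers $0\leqslant\alpha_1\leqslant\dots\leqslant\alpha_{n-1}$, $v_i\in\mathfrak{o}_\mathrm{F}/\mathfrak{p}_\mathrm{F}^m$ with fixed lifts $\tilde v_i\in\mathfrak{o}_\mathrm{F}$ ($\tilde 0=0$), and for each $i$ either $\tilde v_i=0$ or $\mathrm{val}_\mathrm{F}(\tilde v_i)<\alpha_i$. *)

From HB Require Import structures.
From mathcomp Require Import all_boot all_order all_algebra all_fingroup.
From mathcomp Require Import mxrepresentation.
Set Implicit Arguments. Unset Strict Implicit. Unset Printing Implicit Defensive.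
Import Order.TTheory GRing.Theory Num.Theory.
Local Open Scope ring_scope.

Section LocalField.
Variables (F : fieldType) (val : F -> int).

(* "val_F(x) >= c", with the convention val_F(0) = +oo. *)
Definition vge (x : F) (c : int) : bool := (x == 0) || (c <= val x).

(* F is a non-archimedean local field with normalized valuation val
   (the value of val at 0 is irrelevant), and residue field k, realised by the
   reduction map red : o_F -> k_F (values of red outside o_F are irrelevant). *)
Record is_nalocal_field (k : finFieldType) (red : F -> k) : Prop := {
  val_mul : forall x y, x != 0 -> y != 0 -> val (x * y) = val x + val y;
  val_ultra : forall x y (c : int), vge x c -> vge y c -> vge (x + y) c;
  val_normalized : exists x, x != 0 /\ val x = 1;
  val_complete : forall u : nat -> F,
      (forall c : int, exists M, forall i j, (M <= i)%N -> (M <= j)%N ->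
          vge (u i - u j) c) ->
      exists l, forall c : int, exists M, forall i, (M <= i)%N -> vge (u i - l) c;
  red_add : forall x y, vge x 0 -> vge y 0 -> red (x + y) = red x + red y;
  red_mul : forall x y, vge x 0 -> vge y 0 -> red (x * y) = red x * red y;
  red_one : red 1 = 1;
  red_ker : forall x, vge x 0 -> (red x == 0) = vge x 1;
  red_surj : forall a : k, exists x, vge x 0 /\ red x = a
}.

(* Rep = the set of fixed lifts to o_F of the elements of o_F / p_F^m,
   with the lift of 0 equal to 0. *)
Definition lift_system (m : nat) (Rep : F -> Prop) : Prop :=
  [/\ forall r, Rep r -> vge r 0,
      Rep 0,
      forall x, vge x 0 -> exists r, Rep r /\ vge (x - r) m%:Z &
      forall r1 r2, Rep r1 -> Rep r2 -> vge (r1 - r2) m%:Z -> r1 = r2].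

Variable N : nat.

(* K_n = GL_n(o_F) *)
Definition inK (A : 'M[F]_N.+1) : Prop :=
  (forall i j, vge (A i j) 0) /\ \det A != 0 /\ val (\det A) = 0.

Definition inKm (m : nat) (A : 'M[F]_N.+1) : Prop :=
  [/\ inK A,
      forall j : 'I_N.+1, j != ord_max -> vge (A ord_max j) m%:Z &
      vge (A ord_max ord_max - 1) m%:Z].

(* The matrix of C_n with parameters alpha_1..alpha_{n-1}, vt_1..vt_{n-1}
   (here n = N.+1; indices 0 of alpha and vt are unused). *)
Definition Cmat (w : F) (alpha : nat -> nat) (vt : nat -> F) : 'M[F]_N.+1 :=
  \matrix_(i, j)
    if (i < N)%N then (if i == j then w ^+ alpha (N - i)%N else 0)
    else (if (j == N :> nat) then 1 else vt (N - j)%N).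

(* g belongs to C_n (w is the fixed uniformizer, Rep the fixed lifts) *)
Definition inCn (w : F) (m : nat) (Rep : F -> Prop) (g : 'M[F]_N.+1) : Prop :=
  exists (alpha : nat -> nat) (vt : nat -> F),
    [/\ forall i, (1 <= i)%N -> (i < N)%N -> (alpha i <= alpha i.+1)%N,
        forall i, (1 <= i <= N)%N ->
          Rep (vt i) /\ (vt i = 0 \/ val (vt i) < (alpha i)%:Z) &
        g = Cmat w alpha vt].

End LocalField.

Section Cuspidal.
Variables (n : nat) (k : finFieldType) (R : fieldType).

(* Block index of i for the composition of n with break points S
   (a block starts at each s in S with s > 0). *)
Definition blk (S : {set 'I_n.-1.+1}) (i : 'I_n.-1.+1) : nat :=
  #|[set s in S | (0 < s)%N && (s <= i)%N]|.

(* Unipotent radical of the standard parabolic subgroup attached to S: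
   block upper unitriangular matrices. *)
Definition stdUnip (S : {set 'I_n.-1.+1}) : {set {'GL_n[k]}} :=
  [set x : {'GL_n[k]} | [forall i, forall j,
      (GLval x i j == (i == j)%:R) || (blk S i < blk S j)%N]].

(* Cuspidal: irreducible, and no nonzero vector fixed by the unipotent radical
   of any proper parabolic subgroup (= any GL_n(k)-conjugate of a standard
   one with at least one break point). *)
Definition cuspidal d (rho : mx_representation R 'GL_n[k] d) : Prop :=
  mx_irreducible rho /\
  forall (S : {set 'I_n.-1.+1}) (h : {'GL_n[k]}),
    (exists2 s, s \in S & (0 < s)%N) ->
    forall v : 'rV[R]_d,
      (forall u, u \in stdUnip S -> v *m rho (u ^ h)%g = v) -> v = 0.

End Cuspidal.

From HB Require Import structures.
From mathcomp Require Import all_boot all_order all_algebra all_fingroup.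
From mathcomp Require Import mxrepresentation zify ring.
Set Implicit Arguments. Unset Strict Implicit. Unset Printing Implicit Defensive.
Import Order.TTheory GRing.Theory Num.Theory.
Local Open Scope ring_scope.

(* Index rows and columns by 0..N (N = n - 1) and let j < N be the last column in which
   the bottom row of g has a nonzero entry vt_(N-j); it exists because g is not diagonal.
   The reduction of K_n ∩ g K_n(m) g^-1 contains every elementary matrix 1 + c E_pq with
   p > j >= q.  For p < N, g^-1 (1 + x E_pq) g = 1 + x ϖ^(α_(N-q) - α_(N-p)) E_pq since the
   α_i increase.  For p = N the bottom row of g gets in the way, and one conjugates instead
   1 + y E_jq + x E_Nq with y = x ϖ^(α_(N-j)) / vt_(N-j), whose extra entry y lies in p_F
   because val vt_(N-j) < α_(N-j).  These elementary matrices generate the unipotent radical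
   of a proper parabolic subgroup of GL_n(k_F) (lower block triangular, conjugate to a
   standard one by the order-reversing permutation), so cuspidality kills the fixed vector. *)

Section Valuation.
Variables (F : fieldType) (val : F -> int) (k : finFieldType) (red : F -> k).
Hypothesis hF : is_nalocal_field val red.
Local Notation vge := (vge val).

Lemma val_one : val 1 = 0.
Proof.
have := val_mul hF (oner_neq0 F) (oner_neq0 F).
by rewrite mulr1 -{1}[val 1]addr0 => /addrI.
Qed.

Lemma valV x : x != 0 -> val x^-1 = - val x.
Proof.
move=> x0; have := val_mul hF x0 (invr_neq0 x0); rewrite mulfV // val_one; lia.
Qed.

Lemma valN1 : val (-1) = 0.
Proof.
have n1 : (-1 : F) != 0 by rewrite oppr_eq0 oner_neq0.
have := val_mul hF n1 n1; rewrite mulrNN mulr1 val_one; lia.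
Qed.

Lemma valX x e : x != 0 -> val (x ^+ e) = e%:Z * val x.
Proof.
move=> x0; elim: e => [|e IH]; first by rewrite expr0 val_one mul0r.
by rewrite exprS (val_mul hF) ?expf_neq0 // IH intS mulrDl mul1r.
Qed.

Lemma vge0 c : vge 0 c. Proof. by rewrite /vge eqxx. Qed.

Lemma vgeW x c c' : c' <= c -> vge x c -> vge x c'.
Proof.
by rewrite /vge => le_c'c /predU1P[->|/(le_trans le_c'c)->]; rewrite ?eqxx ?orbT.
Qed.

Lemma vgeD x y c : vge x c -> vge y c -> vge (x + y) c.
Proof. exact: (val_ultra hF). Qed.

Lemma vgeM x y c1 c2 : vge x c1 -> vge y c2 -> vge (x * y) (c1 + c2).
Proof.
rewrite /vge mulf_eq0; have [//|x0] := eqVneq x 0; have [//|y0] := eqVneq y 0.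
by rewrite /= (val_mul hF) //; apply: lerD.
Qed.

Lemma vgeN x c : vge x c -> vge (- x) c.
Proof.
move=> xc; rewrite -mulN1r -[c]add0r; apply: vgeM xc.
by rewrite /vge valN1 lexx orbT.
Qed.

Lemma vge_natb (b : bool) : vge b%:R 0.
Proof. by case: b; rewrite /vge ?val_one ?eqxx ?orbT. Qed.

Lemma vge_sum (I : Type) (r : seq I) (P : pred I) (f : I -> F) c :
  (forall i, P i -> vge (f i) c) -> vge (\sum_(i <- r | P i) f i) c.
Proof.
move=> fc; apply: (big_ind (vge^~ c)) => //; first exact: vge0.
by move=> x y; apply: vgeD.
Qed.

Lemma add1_vge1_unit y : vge y 1 -> 1 + y != 0 /\ val (1 + y) = 0.
Proof.
move=> y1; have y0 : vge y 0 by apply: vgeW y1.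
have y1_0 : vge (1 + y) 0 by apply: vgeD; rewrite ?(vge_natb true).
have nz : 1 + y != 0.
  by apply: contraTN y1 => /eqP/addr0_eq<-; rewrite /vge oppr_eq0 oner_eq0 valN1.
split=> //; move: y1_0; rewrite /vge (negbTE nz) /= => val_ge0.
apply/eqP; rewrite eq_le val_ge0 andbT leNgt; apply/negP => val_gt0.
have : vge ((1 + y) - y) 1 by apply: vgeD; [apply/orP; right; lia | exact: vgeN].
by rewrite addrK /vge oner_eq0 val_one.
Qed.

Lemma red0 : red 0 = 0.
Proof. by apply/eqP; rewrite (red_ker hF (vge0 0)) vge0. Qed.

Lemma red_vge1 y : vge y 1 -> red y = 0.
Proof. by move=> y1; apply/eqP; rewrite (red_ker hF) //; apply: vgeW y1. Qed.

Lemma red_natb (b : bool) : red b%:R = b%:R.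
Proof. by case: b; rewrite ?(red_one hF) ?red0. Qed.

End Valuation.

Section ElementaryMatrix.
Variables (R : comNzRingType) (n : nat).
Implicit Types (a b i j : 'I_n) (A : 'M[R]_n).

Definition elem_mx a b (c : R) : 'M[R]_n := 1%:M + c *: delta_mx a b.

Lemma elem_mxE a b c i j :
  elem_mx a b c i j = (i == j)%:R + c * ((i == a) && (j == b))%:R.
Proof. by rewrite !mxE. Qed.

Lemma elem_mx0 a b : elem_mx a b 0 = 1%:M.
Proof. by rewrite /elem_mx scale0r addr0. Qed.

Lemma elem_mxD a b c c' : a != b ->
  elem_mx a b (c + c') = elem_mx a b c *m elem_mx a b c'.
Proof.
move=> ab; rewrite /elem_mx mulmxDl mul1mx mulmxDr mulmx1 -scalemxAl -scalemxAr.
by rewrite mul_delta_mx_0 1?eq_sym // !scaler0 addr0 scalerDl addrAC addrA.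
Qed.

Lemma tr_elem_mx a b c : (elem_mx a b c)^T = elem_mx b a c.
Proof. by rewrite /elem_mx linearD /= tr_scalar_mx linearZ /= trmx_delta. Qed.

Lemma mul_elem_mx_l a b c A i j :
  (elem_mx a b c *m A) i j = A i j + (i == a)%:R * (c * A b j).
Proof.
rewrite mulmxDl mul1mx -scalemxAl !mxE (bigD1 b) //= big1 ?addr0.
  by rewrite mxE eqxx andbT mulrCA.
by move=> l /negbTE lb; rewrite mxE lb andbF mul0r.
Qed.

Lemma mul_elem_mx_r a b c A i j :
  (A *m elem_mx a b c) i j = A i j + A i a * c * (j == b)%:R.
Proof.
rewrite mulmxDr mulmx1 -scalemxAr !mxE (bigD1 a) //= big1 ?addr0.
  by rewrite mxE eqxx /= mulrCA mulrA.
by move=> l /negbTE la; rewrite mxE la mulr0.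
Qed.

Lemma det_elem_mx a b c : \det (elem_mx a b c) = if a == b then 1 + c else 1.
Proof.
wlog le_ba : a b / (b <= a)%N.
  move=> lower; have [/lower//|/ltnW le_ab] := leqP b a.
  by rewrite -det_tr tr_elem_mx lower // eq_sym.
rewrite det_trig; last first.
  apply/is_trig_mxP => i j lt_ij; rewrite elem_mxE.
  have /negbTE-> : i != j by apply: contraTneq lt_ij => ->; rewrite ltnn.
  case: (eqVneq i a) => [ia|]; case: (eqVneq j b) => [jb|] /=; rewrite ?mulr0 ?addr0 //.
  by move: lt_ij; rewrite ia jb ltnNge le_ba.
under eq_bigr => i _ do rewrite elem_mxE eqxx.
case: eqVneq => [<-|ab].
  rewrite (bigD1 a) //= eqxx big1 ?mulr1 // => i /negbTE ia.
  by rewrite ia mulr0 addr0.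
rewrite big1 // => i _; case: (eqVneq i a) => [->|]; last by rewrite mulr0 addr0.
by rewrite (negbTE ab) mulr0 addr0.
Qed.

End ElementaryMatrix.

Section IntegralMatrices.
Variables (F : fieldType) (val : F -> int) (k : finFieldType) (red : F -> k).
Hypothesis hF : is_nalocal_field val red.
Variable N : nat.
Local Notation vge := (vge val).
Implicit Types (A B : 'M[F]_N.+1) (a b : 'I_N.+1).

Definition integral_mx A := forall i j, vge (A i j) 0.

Lemma integral_mulmx A B : integral_mx A -> integral_mx B -> integral_mx (A *m B).
Proof.
move=> intA intB i j; rewrite mxE; apply: (vge_sum hF) => l _.
by rewrite -[0]addr0; apply: (vgeM hF).
Qed.

Lemma integral_elem_mx a b c : vge c 0 -> integral_mx (elem_mx a b c).
Proof.
move=> c0 i j; rewrite elem_mxE; apply: (vgeD hF); first exact: (vge_natb hF).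
by rewrite -[0]addr0; apply: (vgeM hF) => //; apply: (vge_natb hF).
Qed.

Lemma inK_mulmx A B : inK val A -> inK val B -> inK val (A *m B).
Proof.
move=> [intA [detA0 valA]] [intB [detB0 valB]]; split; first exact: integral_mulmx.
by rewrite det_mulmx mulf_neq0 // (val_mul hF) // valA valB.
Qed.

Lemma inK_elem_mx a b c : vge c 0 -> (a == b -> vge c 1) -> inK val (elem_mx a b c).
Proof.
move=> c0 c1; split; first exact: integral_elem_mx.
rewrite det_elem_mx; case: (eqVneq a b) => [ab|_].
  by apply: (add1_vge1_unit hF); apply/c1/eqP.
by rewrite oner_eq0 (val_one hF).
Qed.

Lemma inKm_elem_mx m a b c : (a < N)%N -> vge c 0 -> (a == b -> vge c 1) ->
  inKm val m (elem_mx a b c).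
Proof.
move=> aN c0 c1; have /negbTE maxa : ord_max != a by rewrite -val_eqE /= gtn_eqF.
split; first exact: inK_elem_mx.
  by move=> j /negbTE jmax; rewrite elem_mxE maxa eq_sym jmax mulr0 addr0 vge0.
by rewrite elem_mxE eqxx maxa mulr0 addr0 subrr vge0.
Qed.

Lemma red_sum (I : Type) (r : seq I) (f : I -> F) :
  (forall i, vge (f i) 0) -> red (\sum_(i <- r) f i) = \sum_(i <- r) red (f i).
Proof.
move=> f0; elim: r => [|x r IH]; first by rewrite !big_nil (red0 hF).
by rewrite !big_cons (red_add hF) ?IH //; apply: (vge_sum hF).
Qed.

Lemma map_red_mulmx A B : integral_mx A -> integral_mx B ->
  map_mx red (A *m B) = map_mx red A *m map_mx red B.
Proof.
move=> intA intB; apply/matrixP => i j; rewrite !mxE red_sum.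
  by apply: eq_bigr => l _; rewrite (red_mul hF) ?mxE.
by move=> l; rewrite -[0]addr0; apply: (vgeM hF).
Qed.

Lemma map_red_elem_mx a b c : vge c 0 ->
  map_mx red (elem_mx a b c) = elem_mx a b (red c).
Proof.
move=> c0; apply/matrixP => i j; rewrite mxE !elem_mxE.
rewrite (red_add hF) ?(red_mul hF) ?(red_natb hF) //; try exact: (vge_natb hF).
by rewrite -[0]addr0; apply: (vgeM hF) => //; apply: (vge_natb hF).
Qed.

End IntegralMatrices.

Section LowerUnipotent.
Variables (n : nat) (k : finFieldType) (R : fieldType) (d : nat).
Variable rho : mx_representation R 'GL_n[k] d.
Local Notation N := n.-1.

Definition id_defect (A : 'M[k]_N.+1) : {set 'I_N.+1 * 'I_N.+1} :=
  [set ij | A ij.1 ij.2 != (ij.1 == ij.2)%:R].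

Definition lower_block (j : nat) (ij : 'I_N.+1 * 'I_N.+1) : bool :=
  (j < ij.1)%N && (ij.2 <= j)%N.

Lemma elem_mx_GL (p q : 'I_N.+1) (c : k) : p != q ->
  {x : {'GL_n[k]} | GLval x = elem_mx p q c}.
Proof.
move=> pq; have U : elem_mx p q c \in unitmx.
  by rewrite unitmxE det_elem_mx (negbTE pq) unitr1.
by exists (FinRing.Unit U).
Qed.

(* Induction on the number of entries where x differs from 1: multiplying on the right by an
   elementary matrix clears the entry (p, q) and no other, since column p of x is that of 1. *)
Lemma lower_unipotent_fixed (j : nat) (v : 'rV[R]_d) :
  (forall (p q : 'I_N.+1) c (x : {'GL_n[k]}), lower_block j (p, q) ->
     GLval x = elem_mx p q c -> v *m rho x = v) ->
  forall x : {'GL_n[k]}, {subset id_defect (GLval x) <= lower_block j} ->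
    v *m rho x = v.
Proof.
move=> fix_elem x; move: {2}#|id_defect (GLval x)| (leqnn #|id_defect (GLval x)|) => s.
elim: s x => [|s IH] x card_s lower_x.
  have -> : x = 1%g.
    apply: val_inj; apply/matrixP => i l; rewrite [RHS]mxE; apply/eqP.
    apply: contraTT card_s => defect_il; rewrite -ltnNge card_gt0.
    by apply/set0Pn; exists (i, l); rewrite inE.
  by rewrite repr_mx1 mulmx1.
have [defect0|[[p q] pq_defect]] := set_0Vmem (id_defect (GLval x)).
  by apply: IH => //; rewrite defect0 cards0.
have /andP [/= jp qj] := lower_x _ pq_defect.
have pq : p != q by rewrite -val_eqE /= gtn_eqF // (leq_ltn_trans qj).
have col_p i : GLval x i p = (i == p)%:R.
  apply/eqP/negP => ip; have /lower_x/andP[_ /=] : (i, p) \in id_defect (GLval x).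
    by rewrite inE; apply/negP.
  by rewrite leqNgt jp.
set c := GLval x p q.
have [e eE] := elem_mx_GL c pq; have [e' e'E] := elem_mx_GL (- c) pq.
have xE : x = (x * e' * e)%g.
  apply: val_inj; change (GLval x = GLval (x * e' * e)%g).
  rewrite !GL_MxE e'E eE -mulmxA -elem_mxD // addNr elem_mx0.
  by rewrite mulmx1.
have x'E i l : GLval (x * e')%g i l = GLval x i l - c * ((i == p) && (l == q))%:R.
  by rewrite GL_MxE e'E mul_elem_mx_r col_p mulrN mulNr mulrAC mulrC -natrM mulnb.
rewrite xE repr_mxM ?inE // mulmxA IH.
- exact: fix_elem (lower_x _ pq_defect) eE.
- have : (#|id_defect (GLval x) :\ (p, q)| <= s)%N.
    by move: card_s; rewrite (cardsD1 (p, q)) pq_defect.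
  move=> card_D; apply: (leq_trans _ card_D); apply: subset_leq_card.
  apply/subsetP => -[i l]; rewrite !inE x'E xpair_eqE.
  case: (eqVneq i p) => [->|_]; case: (eqVneq l q) => [->|_] /=;
    by rewrite ?mulr1 ?mulr0 ?subr0 ?subrr ?(negbTE pq) ?eqxx.
- move=> [i l]; rewrite inE x'E => defect_il; apply: lower_x; rewrite inE.
  case: (eqVneq i p) defect_il => [->|_]; case: (eqVneq l q) => [->|_] /=;
    by rewrite ?mulr1 ?mulr0 ?subr0 ?subrr ?(negbTE pq) ?eqxx.
Qed.

Lemma blk_set1 (s i : 'I_N.+1) : (0 < s)%N -> blk [set s] i = (s <= i)%N.
Proof.
move=> s_gt0; rewrite /blk; case: (leqP s i) => [le_si|lt_is].
  suff -> : [set t in [set s] | (0 < t <= i)%N] = [set s] by rewrite cards1.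
  by apply/setP => t; rewrite !inE; case: eqVneq => //= ->; rewrite s_gt0 le_si.
suff -> : [set t in [set s] | (0 < t <= i)%N] = set0 by rewrite cards0.
by apply/setP => t; rewrite !inE; case: eqVneq => //= ->; rewrite andbC leqNgt lt_is.
Qed.

(* Conjugating by the order-reversing permutation matrix turns the upper unipotent radical
   of the standard parabolic with one break at [N - j] into the lower block radical. *)
Lemma cuspidal_lower_fixed (j : nat) (v : 'rV[R]_d) :
  cuspidal rho -> (j < N)%N ->
  (forall (p q : 'I_N.+1) c (x : {'GL_n[k]}), lower_block j (p, q) ->
     GLval x = elem_mx p q c -> v *m rho x = v) ->
  v = 0.
Proof.
move=> [_ cusp] jN fix_elem.
pose r : 'S_N.+1 := perm (@rev_ord_inj N.+1).
have rE i : (r i : nat) = (N - i)%N by rewrite permE /= subSS.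
pose h : {'GL_n[k]} := FinRing.Unit (@unitmx_perm k _ r^-1).
pose s : 'I_N.+1 := inord (N - j).
have sE : (s : nat) = (N - j)%N by rewrite inordK // ltnS leq_subr.
apply: (cusp [set s] h); first by exists s; rewrite ?inE // sE subn_gt0.
move=> u; rewrite inE => /forallP unip_u; apply: (lower_unipotent_fixed fix_elem).
have uhE : GLval (u ^ h)%g = \matrix_(i, l) GLval u (r i) (r l).
  rewrite conjgE !GL_MxE GL_VxE /=.
  rewrite -[invmx _]/((perm_mx (r^-1)%g)^-1) -perm_mxV invgK -row_permE -col_permE.
  by apply/matrixP => i l; rewrite !mxE.
move=> [i l]; rewrite inE uhE mxE -(inj_eq (@perm_inj _ r)) => defect_il.
have /forallP/(_ (r l))/orP[/eqP ul|] := unip_u (r i).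
  by rewrite ul eqxx in defect_il.
rewrite !blk_set1 ?sE ?subn_gt0 // !rE unfold_in /lower_block /=.
by case: (leqP (N - j) (N - i)); case: (leqP (N - j) (N - l)) => //; lia.
Qed.

End LowerUnipotent.

Section CnMatrix.
Variables (F : fieldType) (N : nat) (w : F) (alpha : nat -> nat) (vt : nat -> F).
Local Notation g := (Cmat N w alpha vt).
Implicit Types (i l r q : 'I_N.+1).

Lemma Cmat_top i l : (i < N)%N -> g i l = (i == l)%:R * w ^+ alpha (N - i)%N.
Proof. by move=> iN; rewrite mxE iN; case: eqP; rewrite ?mul1r ?mul0r. Qed.

Lemma Cmat_bottom l : g ord_max l = if l == ord_max then 1 else vt (N - l)%N.
Proof. by rewrite mxE ltnn. Qed.

Lemma Cmat_unit : w != 0 -> g \in unitmx.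
Proof.
move=> w0; rewrite unitmxE unitfE det_trig.
  apply/prodf_neq0 => i _; have [iN|Ni] := ltnP i N.
    by rewrite Cmat_top // eqxx mul1r expf_neq0.
  have -> : i = ord_max by apply/val_inj/eqP; rewrite eqn_leq Ni -ltnS ltn_ord.
  by rewrite Cmat_bottom eqxx oner_neq0.
apply/is_trig_mxP => i l il; have iN : (i < N)%N by rewrite (leq_trans il) // -ltnS.
by rewrite Cmat_top // -val_eqE /= ltn_eqF // mul0r.
Qed.

Lemma Cmat_not_diag :
  ~~ is_diag_mx g -> [exists l : 'I_N.+1, (l < N)%N && (vt (N - l) != 0)].
Proof.
apply: contraR; rewrite negb_exists => /forallP no_vt; apply/is_diag_mxP => i l il.
have [iN|Ni] := ltnP i N.
  by rewrite Cmat_top //; case: (eqVneq i l) il => [->|_]; rewrite ?eqxx ?mul0r.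
have iE : i = ord_max by apply/val_inj/eqP; rewrite eqn_leq Ni -ltnS ltn_ord.
rewrite iE in il *; rewrite Cmat_bottom; case: (eqVneq l ord_max) il => [->|lmax _].
  by rewrite eqxx.
have lN : (l < N)%N by move: lmax; rewrite -val_eqE /= ltn_neqAle -ltnS ltn_ord andbT.
by apply/eqP; move: (no_vt l); rewrite lN /= negbK.
Qed.

Lemma Cmat_last_bottom_entry : ~~ is_diag_mx g ->
  exists2 j, (j < N)%N && (vt (N - j) != 0) & forall p, (j < p < N)%N -> vt (N - p) = 0.
Proof.
move=> /Cmat_not_diag/existsP[l Pl].
pose P j := (j < N)%N && (vt (N - j) != 0).
have ubP (i : nat) : P i -> (i <= N)%N by case/andP => /ltnW.
case: (ex_maxnP (ex_intro P (val l) Pl) ubP) => j Pj j_max; exists j => // p /andP[jp pN].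
by apply/eqP; apply: contraTT jp => vt_p; rewrite -leqNgt j_max // /P pN.
Qed.

(* The [b]-term absorbs the entry [vt (N - r)] that [g] puts in the bottom row. *)
Lemma Cmat_conj_elem r q a b z : (r < N)%N -> (q < N)%N ->
  a * w ^+ alpha (N - q) = w ^+ alpha (N - r) * z ->
  b * w ^+ alpha (N - q) = vt (N - r) * z ->
  elem_mx r q a *m elem_mx ord_max q b *m g = g *m elem_mx r q z.
Proof.
move=> rN qN ha hb; apply/matrixP => i l.
have /negbTE qmax : q != ord_max by rewrite -val_eqE /= ltn_eqF.
have /negbTE rmax : r != ord_max by rewrite -val_eqE /= ltn_eqF.
rewrite -mulmxA !mul_elem_mx_l mul_elem_mx_r qmax mul0r addr0 (Cmat_top l qN).
rewrite -addrA; congr (_ + _); rewrite (eq_sym q l).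
have [iN|Ni] := ltnP i N.
  have /negbTE imax : i != ord_max by rewrite -val_eqE /= ltn_eqF.
  rewrite imax mul0r add0r (Cmat_top r iN).
  case: (eqVneq i r) => [->|_]; case: (l == q);
    by rewrite /= ?eqxx ?mul0r ?mulr0 ?mul1r ?mulr1 ?ha.
have -> : (i == r) = false by apply: contraTF Ni => /eqP->; rewrite -ltnNge.
have -> : i = ord_max by apply/val_inj/eqP; rewrite eqn_leq Ni -ltnS ltn_ord.
rewrite eqxx mul0r addr0 mul1r Cmat_bottom rmax.
by case: (l == q); rewrite /= ?mul0r ?mulr0 ?mul1r ?mulr1 ?hb.
Qed.

End CnMatrix.

Section ReductionOfKcap.
Variables (F : fieldType) (val : F -> int) (k : finFieldType) (red : F -> k).
Hypothesis hF : is_nalocal_field val red.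
Variables (w : F) (N m : nat) (alpha : nat -> nat) (vt : nat -> F).
Hypotheses (w_neq0 : w != 0) (val_w : val w = 1).
Local Notation vge := (vge val).
Local Notation g := (Cmat N w alpha vt).

Definition in_red_Kcap (X : 'M[k]_N.+1) : Prop :=
  exists A, [/\ inK val A, inKm val m (invmx g *m A *m g) & map_mx red A = X].

Lemma vge_expw e : vge (w ^+ e) e%:Z.
Proof. by rewrite /vge (valX hF) // val_w mulr1 lexx orbT. Qed.

Lemma Cmat_conj_lift (r q : 'I_N.+1) a b z : (r < N)%N -> (q < N)%N ->
  a * w ^+ alpha (N - q) = w ^+ alpha (N - r) * z ->
  b * w ^+ alpha (N - q) = vt (N - r) * z ->
  vge a 0 -> vge b 0 -> vge z 0 -> (r == q -> vge a 1 /\ vge z 1) ->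
  in_red_Kcap (elem_mx r q (red a) *m elem_mx ord_max q (red b)).
Proof.
move=> rN qN ha hb a0 b0 z0 rq1.
have /negbTE qmax : ord_max != q by rewrite -val_eqE /= gtn_eqF.
have Ka : inK val (elem_mx r q a) by apply: (inK_elem_mx hF) => // /rq1[].
have Kb : inK val (elem_mx ord_max q b) by apply: (inK_elem_mx hF); rewrite ?qmax.
exists (elem_mx r q a *m elem_mx ord_max q b); split.
- exact: (inK_mulmx hF).
- rewrite -mulmxA (Cmat_conj_elem rN qN ha hb) mulKmx ?Cmat_unit //.
  by apply: (inKm_elem_mx hF) => // /rq1[].
- by rewrite (map_red_mulmx hF Ka.1 Kb.1) !(map_red_elem_mx hF).
Qed.

Variable j : nat.
Hypotheses (j_lt_N : (j < N)%N) (vt_j_neq0 : vt (N - j) != 0).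
Hypothesis val_vt_j : val (vt (N - j)) < (alpha (N - j))%:Z.
Hypothesis vt_gt_j : forall p, (j < p < N)%N -> vt (N - p) = 0.
Hypothesis alpha_step : forall i, (1 <= i)%N -> (i < N)%N -> (alpha i <= alpha i.+1)%N.

Lemma alpha_le (p q : nat) : (q <= p < N)%N -> (alpha (N - p) <= alpha (N - q))%N.
Proof.
move=> /andP[qp pN].
have : {in [pred i | 0 < i <= N]%N &, {homo alpha : i i' / (i <= i')%N}}.
  apply: homo_leq_in => // [y x z|i i' + + i''|i]; first exact: leq_trans.
    by rewrite !inE => /andP[i0 _] /andP[_ i'N] /andP[ii'' i''i']; lia.
  by rewrite !inE => /andP[i0 _] /andP[_ iN]; apply: alpha_step.
by apply; rewrite ?inE; lia.
Qed.

Lemma red_Kcap_lower_elem_top (p q : 'I_N.+1) c : (j < p < N)%N -> (q <= j)%N ->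
  in_red_Kcap (elem_mx p q c).
Proof.
move=> /andP[jp pN] qj; have [x [x0 <-]] := red_surj hF c.
set e := (alpha (N - q) - alpha (N - p))%N.
have le_pq : (alpha (N - p) <= alpha (N - q))%N by apply: alpha_le; lia.
have /negbTE pq : p != q by rewrite -val_eqE /= gtn_eqF //; lia.
have := @Cmat_conj_lift p q x 0 (x * w ^+ e) pN (leq_ltn_trans qj j_lt_N).
rewrite (red0 hF) elem_mx0 mulmx1; apply; rewrite ?vge0 ?pq //.
- by rewrite mulrCA -exprD subnKC.
- by rewrite vt_gt_j ?jp // !mul0r.
- by rewrite -[0]addr0; apply: (vgeM hF) => //; exact: (vgeW _ (vge_expw e)).
Qed.

Lemma red_Kcap_lower_elem_bottom (q : 'I_N.+1) c : (q <= j)%N ->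
  in_red_Kcap (elem_mx ord_max q c).
Proof.
move=> qj; have [x [x0 <-]] := red_surj hF c.
pose J : 'I_N.+1 := inord j; have JE : J = j :> nat by rewrite inordK // ltnW.
have JN : (J < N)%N by rewrite JE.
set y := x * w ^+ alpha (N - j) / vt (N - j).
have y1 : vge y 1.
  rewrite /vge /y; have [->|x_neq0] := eqVneq x 0; first by rewrite !mul0r eqxx.
  apply/orP; right; rewrite !(val_mul hF) ?mulf_neq0 ?expf_neq0 ?invr_neq0 //.
  rewrite (valX hF) // val_w mulr1 (valV hF) //.
  by move: x0; rewrite /vge (negbTE x_neq0) /=; lia.
set e := (alpha (N - q) - alpha (N - j))%N.
have le_jq : (alpha (N - j) <= alpha (N - q))%N by apply: alpha_le; lia.
have := @Cmat_conj_lift J q y x (y * w ^+ e) JN (leq_ltn_trans qj j_lt_N).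
rewrite (red_vge1 hF y1) elem_mx0 mul1mx; apply => //.
- by rewrite JE mulrCA -exprD subnKC.
- by rewrite JE /y -(subnKC le_jq) exprD; field.
- exact: (vgeW _ y1).
- rewrite -[0]addr0; apply: (vgeM hF); first exact: (vgeW _ y1).
  exact: (vgeW _ (vge_expw e)).
- split=> //; rewrite -[1]addr0; apply: (vgeM hF) => //; exact: (vgeW _ (vge_expw e)).
Qed.

Lemma red_Kcap_lower_elem (p q : 'I_N.+1) c : (j < p)%N -> (q <= j)%N ->
  in_red_Kcap (elem_mx p q c).
Proof.
move=> jp qj; have [pN|Np] := ltnP p N.
  by apply: red_Kcap_lower_elem_top; rewrite ?jp.
have -> : p = ord_max by apply/val_inj/eqP; rewrite eqn_leq Np -ltnS ltn_ord.
exact: red_Kcap_lower_elem_bottom.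
Qed.

End ReductionOfKcap.

Theorem proposition4p6
  (F : fieldType) (val : F -> int) (k : finFieldType) (red : F -> k)
  (hF : is_nalocal_field val red)
  (w : F) (hw : w != 0 /\ val w = 1)
  (R : closedFieldType)
  (hR : forall p : nat, p \in [pchar k] -> p \notin [pchar R])
  (n m : nat) (hn : (2 <= n)%N) (hm : (1 <= m)%N)
  (Rep : F -> Prop) (hRep : lift_system val m Rep)
  (d : nat) (rho : mx_representation R 'GL_n[k] d) (hcusp : cuspidal rho)
  (g : 'M[F]_n.-1.+1) (hg : inCn val w m Rep g) (hnd : ~~ is_diag_mx g) :
  forall v : 'rV[R]_d,
    (forall (A : 'M[F]_n.-1.+1) (x : {'GL_n[k]}),
        inK val A -> inKm val m (invmx g *m A *m g) ->
        GLval x = map_mx red A -> v *m rho x = v) ->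
    v = 0.
Proof.
move=> v fixed_v; have [w_neq0 val_w] := hw.
have [alpha [vt [alpha_step vt_spec g_def]]] := hg; subst g.
have [j /andP[j_lt_N vt_j] vt_gt_j] := Cmat_last_bottom_entry hnd.
have val_vt_j : val (vt (n.-1 - j)%N) < (alpha (n.-1 - j)%N)%:Z.
  have /vt_spec[_ [/eqP vt0|//]] : (1 <= n.-1 - j <= n.-1)%N by lia.
  by rewrite vt0 in vt_j.
apply: (cuspidal_lower_fixed hcusp j_lt_N) => p q c x /andP[/= jp qj] xE.
have [A [KA KmA redA]] :=
  red_Kcap_lower_elem hF m w_neq0 val_w j_lt_N vt_j val_vt_j vt_gt_j alpha_step c jp qj.
by apply: (fixed_v A) => //; rewrite xE redA.
Qed.
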